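(* Let $\mathfrak{b}$ be the least cardinality of a subset of $\mathbb{N}^\mathbb{N}$ not contained in a $\sigma$-compact subset of $\mathbb{N}^\mathbb{N}$, and let $X=[0,\mathfrak{b})$ be the space of ordinals less than $\mathfrak{b}$ with the order topology. Then $C_c(X)$ has a $\mathfrak{G}$-base and countable $cs^\ast$-character, but $C_c(X)$ has uncountable tightness and uncountable pseudocharacter; in particular $C_c(X)$ is not submetrizable and is not a $\sigma$-space.
   Context: $C_c(X)$ is the space of continuous real-valued functions on $X$ with the compact-open topology. A $\mathfrak{G}$-base is a base $\{U_\alpha:\alpha\in\mathbb{N}^\mathbb{N}\}$ of neighborhoods of zero with $U_\beta\subseteq U_\alpha$ whenever $\alpha\le\beta$ coordinatewise. A family $\mathcal{N}$ is a $cs^\ast$-network at $x$ if for each sequence $(x_n)\to x$ and each neighborhood $O_x$ there is $N\in\mathcal{N}$ with $x\in N\subseteq O_x$ and $\{n:x_n\in N\}$ infinite; the $cs^\ast$-character is the supremum over points of the least size of such a family. Submetrizable means admitting a weaker metrizable topology. A $\sigma$-space is a regular space with a $\sigma$-locally finite network. *)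

From Stdlib Require Import Reals List Classical.

Definition set (T : Type) := T -> Prop.

Definition is_topology {T : Type} (op : set T -> Prop) : Prop :=
  op (fun _ => True) /\
  (forall U V, op U -> op V -> op (fun x => U x /\ V x)) /\
  (forall F : set T -> Prop, (forall U, F U -> op U) ->
     op (fun x => exists U, F U /\ U x)).

Definition is_nbhd {T : Type} (op : set T -> Prop) (x : T) (N : set T) : Prop :=
  exists U, op U /\ U x /\ (forall y, U y -> N y).

Definition closure {T : Type} (op : set T -> Prop) (A : set T) (x : T) : Prop :=
  forall U, op U -> U x -> exists y, U y /\ A y.

Definition compact_in {T : Type} (op : set T -> Prop) (K : set T) : Prop :=
  forall F : set T -> Prop,
    (forall U, F U -> op U) ->
    (forall x, K x -> exists U, F U /\ U x) ->
    exists L : list (set T),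
      (forall U, In U L -> F U) /\ (forall x, K x -> exists U, In U L /\ U x).

Definition converges {T : Type} (op : set T -> Prop) (s : nat -> T) (x : T) : Prop :=
  forall N, is_nbhd op x N -> exists n0, forall n, (n0 <= n)%nat -> N (s n).

Definition infinitely_often (P : nat -> Prop) : Prop :=
  forall m, exists n, (m <= n)%nat /\ P n.

Definition G_base_at {T : Type} (op : set T -> Prop) (z : T) : Prop :=
  exists U : (nat -> nat) -> set T,
    (forall a, is_nbhd op z (U a)) /\
    (forall N, is_nbhd op z N -> exists a, forall y, U a y -> N y) /\
    (forall a b : nat -> nat, (forall n, (a n <= b n)%nat) ->
       forall y, U b y -> U a y).

Definition cs_star_network_at {T : Type} (op : set T -> Prop) (x : T)
  (Nw : set T -> Prop) : Prop :=
  forall s : nat -> T, converges op s x ->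
  forall O, is_nbhd op x O ->
  exists N, Nw N /\ N x /\ (forall y, N y -> O y) /\
            infinitely_often (fun n => N (s n)).

(* countable cs*-character: every point has a countable cs*-network
   (a countable family is given as a nat-indexed family; repetitions allowed) *)
Definition countable_cs_star_character {T : Type} (op : set T -> Prop) : Prop :=
  forall x, exists Nw : nat -> set T,
    cs_star_network_at op x (fun N => exists k, N = Nw k).

Definition uncountable_tightness {T : Type} (op : set T -> Prop) : Prop :=
  exists (A : set T) (x : T), closure op A x /\
    forall b : nat -> T, (forall n, A (b n)) ->
      ~ closure op (fun y => exists n, y = b n) x.

Definition uncountable_pseudocharacter {T : Type} (op : set T -> Prop) : Prop :=
  exists x : T, forall U : nat -> set T, (forall n, op (U n) /\ U n x) ->
    exists y, y <> x /\ forall n, U n y.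

Definition is_metric {T : Type} (d : T -> T -> R) : Prop :=
  (forall x y, (0 <= d x y)%R) /\
  (forall x y, d x y = 0%R <-> x = y) /\
  (forall x y, d x y = d y x) /\
  (forall x y z, (d x z <= d x y + d y z)%R).

Definition metric_open {T : Type} (d : T -> T -> R) (U : set T) : Prop :=
  forall x, U x -> exists eps, (0 < eps)%R /\ forall y, (d x y < eps)%R -> U y.

Definition submetrizable {T : Type} (op : set T -> Prop) : Prop :=
  exists d : T -> T -> R, is_metric d /\ forall U, metric_open d U -> op U.

Definition regular_space {T : Type} (op : set T -> Prop) : Prop :=
  forall (x : T) (F : set T), op (fun y => ~ F y) -> ~ F x ->
    exists U V, op U /\ op V /\ U x /\ (forall y, F y -> V y) /\
                (forall y, ~ (U y /\ V y)).

Definition network {T : Type} (op : set T -> Prop) (Nw : set T -> Prop) : Prop :=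
  forall x U, op U -> U x -> exists N, Nw N /\ N x /\ forall y, N y -> U y.

(* locally finite family: each point has a neighbourhood meeting only
   finitely many members (members counted up to extensional equality) *)
Definition locally_finite {T : Type} (op : set T -> Prop) (F : set T -> Prop) : Prop :=
  forall x, exists W, is_nbhd op x W /\
    exists L : list (set T), forall S, F S -> (exists z, W z /\ S z) ->
      exists S', In S' L /\ forall z, S z <-> S' z.

Definition sigma_space {T : Type} (op : set T -> Prop) : Prop :=
  regular_space op /\
  exists Fn : nat -> (set T -> Prop),
    network op (fun S => exists n, Fn n S) /\ forall n, locally_finite op (Fn n).

(* product topology on N^N *)
Definition baire_open (U : set (nat -> nat)) : Prop :=
  forall x, U x -> exists n, forall y, (forall i, (i < n)%nat -> y i = x i) -> U y.

Definition sigma_compact_baire (S : set (nat -> nat)) : Prop :=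
  exists K : nat -> set (nat -> nat),
    (forall n, compact_in baire_open (K n)) /\ forall x, S x <-> exists n, K n x.

Definition not_in_sigma_compact (F : set (nat -> nat)) : Prop :=
  ~ exists S, sigma_compact_baire S /\ forall x, F x -> S x.

Definition injects {A B : Type} (P : set A) (Q : set B) : Prop :=
  exists f : A -> B, (forall x, P x -> Q (f x)) /\
    forall x y, P x -> P y -> f x = f y -> x = y.

Definition bijects {A B : Type} (P : set A) (Q : set B) : Prop :=
  exists f : A -> B, (forall x, P x -> Q (f x)) /\
    (forall x y, P x -> P y -> f x = f y -> x = y) /\
    (forall z, Q z -> exists x, P x /\ f x = z).

Definition strict_well_order {X : Type} (lt : X -> X -> Prop) : Prop :=
  (forall x, ~ lt x x) /\
  (forall x y z, lt x y -> lt y z -> lt x z) /\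
  (forall x y, lt x y \/ x = y \/ lt y x) /\
  well_founded lt.

(* (X, lt) is order-isomorphic to the ordinal b = [0, b):
   a well-order of cardinality b (in bijection with a subset of N^N not
   contained in a sigma-compact set, hence of cardinality >= b) all of whose
   proper initial segments have cardinality < b (no family not contained in
   a sigma-compact set injects into them). *)
Definition is_ordinal_b {X : Type} (lt : X -> X -> Prop) : Prop :=
  strict_well_order lt /\
  (exists F : set (nat -> nat), not_in_sigma_compact F /\
     bijects (fun _ : X => True) F) /\
  (forall x : X, ~ exists F : set (nat -> nat),
       not_in_sigma_compact F /\ injects F (fun y => lt y x)).

Definition order_open {X : Type} (lt : X -> X -> Prop) (U : set X) : Prop :=
  forall x, U x -> exists l u : option X,
    (match l with None => True | Some a => lt a x end) /\
    (match u with None => True | Some b => lt x b end) /\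
    forall y, (match l with None => True | Some a => lt a y end) ->
              (match u with None => True | Some b => lt y b end) -> U y.

Definition continuous_on {X : Type} (lt : X -> X -> Prop) (f : X -> R) : Prop :=
  forall V : R -> Prop, open_set V -> order_open lt (fun x => V (f x)).

Definition CX {X : Type} (lt : X -> X -> Prop) : Type :=
  { f : X -> R | continuous_on lt f }.

(* compact-open topology on C(X): generated by the subbasic sets
   [K, V] = { f | f(K) subset V }, K compact in X, V open in R *)
Definition co_open {X : Type} (lt : X -> X -> Prop) (W : set (CX lt)) : Prop :=
  forall f : CX lt, W f ->
    exists L : list (set X * (R -> Prop)),
      (forall p, In p L ->
         compact_in (order_open lt) (fst p) /\ open_set (snd p) /\
         forall x, fst p x -> snd p (proj1_sig f x)) /\
      (forall g : CX lt,
         (forall p, In p L -> forall x, fst p x -> snd p (proj1_sig g x)) -> W g).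

Lemma const_continuous {X : Type} (lt : X -> X -> Prop) (c : R) :
  continuous_on lt (fun _ => c).
Proof.
  intros V _ x Hx. exists None, None. simpl. repeat split; auto.
Qed.

Definition zeroC {X : Type} (lt : X -> X -> Prop) : CX lt :=
  exist _ (fun _ => 0%R) (const_continuous lt 0%R).

From Stdlib Require Import Reals List Classical Lia Lra.
From Stdlib Require Import ClassicalEpsilon ProofIrrelevance FunctionalExtensionality.

(* The points of X = [0, b) are indexed by a family e of N^N that is unbounded for the
   eventual-domination order <=* (equivalently, not inside a sigma-compact set) while each
   initial segment has a <=*-bounded image.  Hence every countable subset of X is bounded,
   so are compact subsets, and every continuous function on X is eventually constant.
   Consequently countably many neighbourhoods of 0 in C_c(X) all contain the indicator of
   some tail (z, b): this gives uncountable pseudocharacter (so C_c(X) is neither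
   submetrizable nor a sigma-space), and 0 lies in the closure of these indicators but not
   in that of countably many of them.  Convergent sequences converge uniformly, which gives
   countable cs*-character, and the sets of functions of size < 1/(a(0)+1) on
   {x | e y <=* a for all y <= x} form a G-base at 0. *)

Lemma le_list_max (l : list nat) (n : nat) : In n l -> (n <= list_max l)%nat.
Proof.
  intros Hn. pose proof (proj1 (list_max_le l (list_max l)) (le_n _)) as Hall.
  rewrite Forall_forall in Hall. exact (Hall n Hn).
Qed.

Lemma list_witnesses {A B : Type} (P : A -> B -> Prop) (L : list B) :
  (forall b, In b L -> exists a, P a b) ->
  exists xs : list A, (forall a, In a xs -> exists b, P a b) /\
                      forall b, In b L -> exists a, In a xs /\ P a b.
Proof.
  induction L as [|b L IH]; intros H.
  - exists nil. split; intros _ [].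
  - destruct IH as [xs [Hxs HL]]; [intros b' Hb'; apply H; right; exact Hb'|].
    destruct (H b (or_introl eq_refl)) as [a Ha].
    exists (a :: xs). split.
    + intros a' [<-|Ha']; [exists b; exact Ha | exact (Hxs a' Ha')].
    + intros b' [<-|Hb'].
      * exists a. split; [left; reflexivity | exact Ha].
      * destruct (HL b' Hb') as [a' [Ha' Pa']]. exists a'. split; [right|]; assumption.
Qed.

Definition finitely_covered {T : Type} (F : set T -> Prop) (P : set T) : Prop :=
  exists L : list (set T),
    (forall U, In U L -> F U) /\ (forall x, P x -> exists U, In U L /\ U x).

Section FinitelyCovered.

Variables (T : Type) (F : set T -> Prop).

Lemma finitely_covered_mono (P Q : set T) :
  finitely_covered F P -> (forall x, Q x -> P x) -> finitely_covered F Q.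
Proof. intros [L [HL HP]] HQP. exists L. split; [exact HL|]. intros x Qx. apply HP, HQP, Qx. Qed.

Lemma finitely_covered_empty (P : set T) : (forall x, ~ P x) -> finitely_covered F P.
Proof. intros HP. exists nil. split; [intros _ []|]. intros x Px. contradiction (HP x Px). Qed.

Lemma finitely_covered_single (U : set T) : F U -> finitely_covered F U.
Proof.
  intros FU. exists (U :: nil). split.
  - intros V [<-|[]]. exact FU.
  - intros x Ux. exists U. split; [left; reflexivity | exact Ux].
Qed.

Lemma finitely_covered_union (P Q : set T) :
  finitely_covered F P -> finitely_covered F Q -> finitely_covered F (fun x => P x \/ Q x).
Proof.
  intros [L1 [F1 C1]] [L2 [F2 C2]]. exists (L1 ++ L2). split.
  - intros U HU. apply in_app_or in HU. destruct HU; auto.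
  - intros x [Px|Qx].
    + destruct (C1 x Px) as [U [HU Ux]]. exists U. split; [apply in_or_app; left|]; assumption.
    + destruct (C2 x Qx) as [U [HU Ux]]. exists U. split; [apply in_or_app; right|]; assumption.
Qed.

Lemma finitely_covered_bounded_union (P : nat -> set T) (n : nat) :
  (forall k, (k <= n)%nat -> finitely_covered F (P k)) ->
  finitely_covered F (fun x => exists k, (k <= n)%nat /\ P k x).
Proof.
  induction n as [|n IH]; intros HP.
  - apply finitely_covered_mono with (P := P 0%nat); [apply HP; lia|].
    intros x [k [Hk Px]]. replace k with 0%nat in Px by lia. exact Px.
  - apply finitely_covered_mono
      with (P := fun x => (exists k, (k <= n)%nat /\ P k x) \/ P (S n) x).
    + apply finitely_covered_union; [apply IH; intros k Hk|]; apply HP; lia.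
    + intros x [k [Hk Px]]. destruct (Nat.eq_dec k (S n)) as [->|Hne]; [right | left]; eauto.
      exists k. split; [lia | exact Px].
Qed.

End FinitelyCovered.

Lemma compact_point_cover {T : Type} (op : set T -> Prop) (K : set T) (N : T -> set T) :
  compact_in op K -> (forall x, K x -> op (N x) /\ N x x) ->
  exists xs : list T, (forall x, In x xs -> K x) /\
                      forall y, K y -> exists x, In x xs /\ N x y.
Proof.
  intros HK HN.
  destruct (HK (fun U => exists x, K x /\ U = N x)) as [L [HL HcovL]].
  - intros U [x [Kx ->]]. apply HN, Kx.
  - intros x Kx. exists (N x). split; [exists x; split; [exact Kx | reflexivity] | apply HN, Kx].
  - destruct (list_witnesses (fun x U => K x /\ U = N x) L HL) as [xs [Hxs HLxs]].
    exists xs. split.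
    + intros x Hx. destruct (Hxs x Hx) as [U [Kx _]]. exact Kx.
    + intros y Ky. destruct (HcovL y Ky) as [U [HU Uy]].
      destruct (HLxs U HU) as [x [Hx [_ ->]]]. exists x. split; assumption.
Qed.

Lemma single_compact {T : Type} (op : set T -> Prop) (b : T) : compact_in op (fun y => y = b).
Proof.
  intros F _ Hcov. destruct (Hcov b eq_refl) as [U [FU Ub]].
  apply finitely_covered_mono with (P := U); [apply finitely_covered_single, FU|].
  intros y ->. exact Ub.
Qed.

Definition box (h : nat -> nat) : set (nat -> nat) := fun f => forall i, f i <= h i.

Definition cylinder (h : nat -> nat) (s : list nat) : set (nat -> nat) :=
  fun f => box h f /\ forall i, i < length s -> f i = nth i s 0.

Lemma cylinder_extend (h : nat -> nat) (F : set (nat -> nat) -> Prop) (s : list nat) :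
  ~ finitely_covered F (cylinder h s) ->
  exists k, ~ finitely_covered F (cylinder h (s ++ k :: nil)).
Proof.
  intros Hs. apply NNPP. intros Hext. apply Hs.
  apply finitely_covered_mono
    with (P := fun f => exists k, k <= h (length s) /\ cylinder h (s ++ k :: nil) f).
  - apply finitely_covered_bounded_union. intros k _.
    apply NNPP. intros Hk. apply Hext. exists k. exact Hk.
  - intros f [Hb Hf]. exists (f (length s)). split; [apply Hb|]. split; [exact Hb|].
    intros i Hi. rewrite length_app in Hi. simpl in Hi.
    destruct (Nat.eq_dec i (length s)) as [->|Hne].
    + rewrite app_nth2, Nat.sub_diag by lia. reflexivity.
    + rewrite app_nth1 by lia. apply Hf. lia.
Qed.

(* König's argument: if [box h] had no finite subcover, successive one-point
   extensions that stay uncovered would converge to a point of [box h] none of whose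
   basic neighbourhoods is covered by a single member of the cover. *)
Lemma box_compact (h : nat -> nat) : compact_in baire_open (box h).
Proof.
  intros F HF Hcov. change (finitely_covered F (box h)). apply NNPP. intros Hbox.
  assert (Hnil : ~ finitely_covered F (cylinder h nil)).
  { intros Hc. apply Hbox. apply finitely_covered_mono with (1 := Hc).
    intros f Hf. split; [exact Hf | simpl; lia]. }
  destruct (choice (fun (s : list nat) k =>
      ~ finitely_covered F (cylinder h s) ->
      ~ finitely_covered F (cylinder h (s ++ k :: nil)))) as [next Hnext].
  { intros s. destruct (classic (finitely_covered F (cylinder h s))) as [Hc|Hc].
    - exists 0. contradiction.
    - destruct (cylinder_extend h F s Hc) as [k Hk]. exists k. auto. }
  set (pre := fix pre n := match n with 0 => nil | S n => pre n ++ next (pre n) :: nil end).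
  assert (Hlen : forall n, length (pre n) = n).
  { induction n as [|n IH]; simpl; [reflexivity|]. rewrite length_app, IH. simpl. lia. }
  assert (Hunc : forall n, ~ finitely_covered F (cylinder h (pre n))).
  { induction n as [|n IH]; [exact Hnil | apply Hnext, IH]. }
  assert (Hprefix : forall n m i, n <= m -> i < n -> nth i (pre m) 0 = nth i (pre n) 0).
  { intros n m i Hnm Hi. induction Hnm as [|m Hnm IH]; [reflexivity|].
    simpl. rewrite app_nth1; [exact IH|]. rewrite Hlen. lia. }
  set (p := fun i => nth i (pre (S i)) 0).
  assert (Hp : forall n i, i < n -> p i = nth i (pre n) 0).
  { intros n i Hi. symmetry. apply Hprefix; lia. }
  assert (Hpbox : box h p).
  { intros i. destruct (classic (exists f, cylinder h (pre (S i)) f)) as [[f [Hb Hf]]|Hempty].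
    - unfold p. rewrite <- Hf by (rewrite Hlen; lia). apply Hb.
    - exfalso. apply (Hunc (S i)), finitely_covered_empty. intros f Hf. eauto. }
  destruct (Hcov p Hpbox) as [U [FU Up]].
  destruct (HF U FU p Up) as [n Hn].
  apply (Hunc n). apply finitely_covered_mono with (P := U); [apply finitely_covered_single, FU|].
  intros f [_ Hf]. apply Hn. intros i Hi.
  rewrite Hf by (rewrite Hlen; exact Hi). symmetry. apply Hp, Hi.
Qed.

Lemma baire_compact_bounded (K : set (nat -> nat)) :
  compact_in baire_open K -> exists h, forall f, K f -> box h f.
Proof.
  intros HK. destruct (choice (fun i b => forall f, K f -> f i <= b)) as [h Hh].
  - intros i.
    destruct (compact_point_cover baire_open K (fun f g => g i = f i) HK) as [fs [_ Hfs]].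
    { intros f _. split; [|reflexivity]. intros g Hg. exists (S i).
      intros g' Hg'. rewrite Hg' by lia. exact Hg. }
    exists (list_max (map (fun f => f i) fs)). intros g Kg.
    destruct (Hfs g Kg) as [f [Hf ->]]. apply le_list_max, (in_map (fun f => f i)), Hf.
  - exists h. intros f Kf i. apply Hh, Kf.
Qed.

Definition eventually_le (f g : nat -> nat) : Prop := exists n, forall i, n <= i -> f i <= g i.

Definition dominated (P : set (nat -> nat)) : Prop := exists g, forall f, P f -> eventually_le f g.

Lemma dominated_mono (P Q : set (nat -> nat)) :
  dominated Q -> (forall f, P f -> Q f) -> dominated P.
Proof. intros [g Hg] HPQ. exists g. intros f Pf. apply Hg, HPQ, Pf. Qed.

Lemma dominated_box (h : nat -> nat) : dominated (box h).
Proof. exists h. intros f Hf. exists 0. intros i _. apply Hf. Qed.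

Lemma dominated_singleton (g : nat -> nat) : dominated (fun f => f = g).
Proof. exists g. intros f ->. exists 0. intros i _. lia. Qed.

Lemma dominated_countable_union (P : nat -> set (nat -> nat)) :
  (forall n, dominated (P n)) -> dominated (fun f => exists n, P n f).
Proof.
  intros HP. destruct (choice (fun n g => forall f, P n f -> eventually_le f g) HP) as [g Hg].
  exists (fun i => list_max (map (fun n => g n i) (seq 0 (S i)))).
  intros f [n Pf]. destruct (Hg n f Pf) as [m Hm].
  exists (Nat.max n m). intros i Hi. eapply Nat.le_trans; [apply Hm; lia|].
  apply le_list_max, (in_map (fun n => g n i)), in_seq. lia.
Qed.

Lemma dominated_union (P Q : set (nat -> nat)) :
  dominated P -> dominated Q -> dominated (fun f => P f \/ Q f).
Proof.
  intros HP HQ.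
  apply dominated_mono with (Q := fun f => exists n : nat, (if Nat.eqb n 0 then P else Q) f).
  - apply dominated_countable_union. intros [|n]; assumption.
  - intros f [Pf|Qf]; [exists 0 | exists 1]; assumption.
Qed.

Lemma dominated_of_sigma_compact (P : set (nat -> nat)) :
  ~ not_in_sigma_compact P -> dominated P.
Proof.
  intros Hsc. apply NNPP in Hsc. destruct Hsc as [S [[K [HK HS]] HPS]].
  destruct (choice (fun n h => forall f, K n f -> box h f)) as [h Hh].
  { intros n. apply baire_compact_bounded, HK. }
  apply dominated_mono with (Q := fun f => exists n, box (h n) f).
  - apply dominated_countable_union. intros n. apply dominated_box.
  - intros f Pf. destruct (proj1 (HS f) (HPS f Pf)) as [n Kf]. exists n. apply Hh, Kf.
Qed.

Lemma sigma_compact_of_dominated (P : set (nat -> nat)) :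
  dominated P -> ~ not_in_sigma_compact P.
Proof.
  intros [g Hg] Hnsc. apply Hnsc.
  exists (fun f => exists k, box (fun i => Nat.max k (g i)) f). split.
  - exists (fun k => box (fun i => Nat.max k (g i))). split; [intros k; apply box_compact | tauto].
  - intros f Pf. destruct (Hg f Pf) as [n Hn].
    exists (list_max (map f (seq 0 n))). intros i.
    destruct (Nat.lt_ge_cases i n) as [Hi|Hi].
    + assert (f i <= list_max (map f (seq 0 n))).
      { apply le_list_max, in_map, in_seq. lia. }
      lia.
    + specialize (Hn i Hi). lia.
Qed.

Lemma not_in_sigma_compact_iff (P : set (nat -> nat)) :
  not_in_sigma_compact P <-> ~ dominated P.
Proof.
  split.
  - intros Hnsc Hdom. exact (sigma_compact_of_dominated P Hdom Hnsc).
  - intros Hnd. apply NNPP. intros Hsc. exact (Hnd (dominated_of_sigma_compact P Hsc)).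
Qed.

Open Scope R_scope.

Lemma inv_succ_pos (n : nat) : 0 < / (INR n + 1).
Proof. apply Rinv_0_lt_compat. pose proof (pos_INR n). lra. Qed.

Lemma inv_succ_le (m n : nat) : (m <= n)%nat -> / (INR n + 1) <= / (INR m + 1).
Proof.
  intros Hmn. apply le_INR in Hmn. pose proof (pos_INR m).
  apply Rinv_le_contravar; lra.
Qed.

Lemma inv_succ_lt (eps : R) : 0 < eps -> exists n, / (INR n + 1) < eps.
Proof.
  intros Heps. destruct (archimed_cor1 eps Heps) as [n [Hn Hn0]]. exists n.
  apply lt_0_INR in Hn0. apply Rle_lt_trans with (2 := Hn).
  apply Rinv_le_contravar; lra.
Qed.

Lemma inv_succ_double (m : nat) : 2 * / (INR (2 * m + 1) + 1) = / (INR m + 1).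
Proof.
  rewrite plus_INR, mult_INR. simpl. pose proof (pos_INR m). field. lra.
Qed.

Lemma eq0_of_lt_inv_succ (a : R) : 0 <= a -> (forall n, a < / (INR n + 1)) -> a = 0.
Proof.
  intros Ha Hsmall. destruct (Req_dec a 0) as [|Hne]; [assumption|].
  destruct (inv_succ_lt a) as [n Hn]; [lra|]. specialize (Hsmall n). lra.
Qed.

Lemma open_set_inv_succ (V : R -> Prop) (c : R) :
  open_set V -> V c -> exists m, forall r, Rabs (r - c) < / (INR m + 1) -> V r.
Proof.
  intros HV Vc. destruct (HV c Vc) as [d Hd]. destruct (inv_succ_lt d (cond_pos d)) as [m Hm].
  exists m. intros r Hr. apply Hd. unfold disc. lra.
Qed.

Lemma open_ball (c r : R) : open_set (fun x => Rabs (x - c) < r).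
Proof.
  intros x Hx. assert (Hd : 0 < r - Rabs (x - c)) by lra.
  exists (mkposreal _ Hd). intros y Hy. unfold disc in Hy. simpl in Hy.
  replace (y - c) with ((y - x) + (x - c)) by ring.
  eapply Rle_lt_trans; [apply Rabs_triang | lra].
Qed.

Lemma open_neq (c : R) : open_set (fun x => x <> c).
Proof.
  intros x Hx. assert (Hd : 0 < Rabs (x - c)) by (apply Rabs_pos_lt; intros E; apply Hx; lra).
  exists (mkposreal _ Hd). intros y Hy ->. unfold disc in Hy. simpl in Hy.
  rewrite Rabs_minus_sym in Hy. lra.
Qed.

Lemma Rabs_sub_via (a b c : R) : Rabs (a - c) <= Rabs (a - b) + Rabs (c - b).
Proof.
  replace (a - c) with ((a - b) + - (c - b)) by ring.
  rewrite <- (Rabs_Ropp (c - b)). apply Rabs_triang.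
Qed.

Lemma submetrizable_countable_pseudocharacter {T : Type} (op : set T -> Prop) :
  submetrizable op -> ~ uncountable_pseudocharacter op.
Proof.
  intros [d [[Hd0 [Hd1 [_ Hd3]]] Hop]] [x Hx].
  destruct (Hx (fun n y => d x y < / (INR n + 1))) as [y [Hyx Hy]].
  - intros n. split.
    + apply Hop. intros z Hz. exists (/ (INR n + 1) - d x z). split; [lra|].
      intros w Hw. specialize (Hd3 x z w). lra.
    + rewrite (proj2 (Hd1 x x) eq_refl). apply inv_succ_pos.
  - apply Hyx. symmetry. apply Hd1, eq0_of_lt_inv_succ; [apply Hd0 | exact Hy].
Qed.

Section SigmaSpace.

Variables (T : Type) (op : set T -> Prop).
Hypothesis op_full : op (fun _ => True).
Hypothesis op_inter : forall U V, op U -> op V -> op (fun x => U x /\ V x).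

Definition nbhd_misses (x : T) (S : set T) : Prop :=
  exists V, op V /\ V x /\ forall z, ~ (V z /\ S z).

Lemma list_nbhd_misses (x : T) (L : list (set T)) :
  exists O, op O /\ O x /\ forall S, In S L -> nbhd_misses x S -> forall z, ~ (O z /\ S z).
Proof.
  induction L as [|S L [O [HO [Ox HOL]]]].
  - exists (fun _ => True). split; [exact op_full | split; [exact I | intros S []]].
  - destruct (classic (nbhd_misses x S)) as [[V [HV [Vx HVS]]]|HS].
    + exists (fun z => O z /\ V z).
      split; [apply op_inter; assumption | split; [split; assumption|]].
      intros S' [<-|HS'] HmS' z [[Oz Vz] Sz]; [exact (HVS z (conj Vz Sz))|].
      exact (HOL S' HS' HmS' z (conj Oz Sz)).
    + exists O. split; [exact HO | split; [exact Ox|]].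
      intros S' [<-|HS'] HmS' z [Oz Sz]; [contradiction|].
      exact (HOL S' HS' HmS' z (conj Oz Sz)).
Qed.

Lemma locally_finite_nbhd_misses (x : T) (F : set T -> Prop) :
  locally_finite op F ->
  exists O, op O /\ O x /\ forall S, F S -> nbhd_misses x S -> forall z, ~ (O z /\ S z).
Proof.
  intros HF. destruct (HF x) as [W [[W' [HW' [W'x HW'W]]] [L HL]]].
  destruct (list_nbhd_misses x L) as [O [HO [Ox HOL]]].
  exists (fun z => W' z /\ O z). split; [apply op_inter; assumption | split; [split; assumption|]].
  intros S FS [V [HV [Vx HVS]]] z [[W'z Oz] Sz].
  destruct (HL S FS) as [S' [HS' HSS']]; [exists z; split; [apply HW'W, W'z | exact Sz]|].
  apply (HOL S' HS') with (z := z).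
  - exists V. split; [exact HV | split; [exact Vx|]]. intros z' [Vz' S'z'].
    apply (HVS z'). split; [exact Vz' | apply HSS', S'z'].
  - split; [exact Oz | apply HSS', Sz].
Qed.

(* For y <> x, regularity gives a network member containing y that a neighbourhood of x
   misses; so y is outside the neighbourhood O n of x built from the family F n. *)
Lemma sigma_space_countable_pseudocharacter :
  (forall x, op (fun y => y <> x)) -> sigma_space op -> ~ uncountable_pseudocharacter op.
Proof.
  intros HT1 [Hreg [Fn [Hnet Hlf]]] [x Hx].
  destruct (choice (fun n O => (op O /\ O x) /\
      forall S, Fn n S -> nbhd_misses x S -> forall z, ~ (O z /\ S z))) as [O HO].
  { intros n. destruct (locally_finite_nbhd_misses x (Fn n) (Hlf n)) as [O [HO [Ox HOF]]].
    exists O. split; [split|]; assumption. }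
  destruct (Hx O) as [y [Hyx Hy]]; [intros n; apply HO|].
  destruct (Hreg y (fun z => z = x)) as [U [V [HU [HV [Uy [HxV HUV]]]]]];
    [apply HT1 | exact Hyx |].
  destruct (Hnet y U HU Uy) as [N [[n FN] [Ny HNU]]].
  apply (proj2 (HO n) N FN) with (z := y); [|split; [apply Hy | exact Ny]].
  exists V. split; [exact HV | split; [apply HxV; reflexivity|]].
  intros z [Vz Nz]. apply (HUV z). split; [apply HNU, Nz | exact Vz].
Qed.

End SigmaSpace.

Section OrderTopology.

Variables (X : Type) (lt : X -> X -> Prop).

Definition compact_open_pairs (L : list (set X * (R -> Prop))) : Prop :=
  forall p, In p L -> compact_in (order_open lt) (fst p) /\ open_set (snd p).

Definition maps_into (L : list (set X * (R -> Prop))) (g : CX lt) : Prop :=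
  forall p, In p L -> forall x, fst p x -> snd p (proj1_sig g x).

Lemma co_open_maps_into (L : list (set X * (R -> Prop))) :
  compact_open_pairs L -> co_open lt (maps_into L).
Proof.
  intros HL f Hf. exists L. split; [|auto].
  intros p Hp. destruct (HL p Hp) as [HK HV].
  split; [exact HK | split; [exact HV | apply Hf, Hp]].
Qed.

Lemma co_open_basic (W : set (CX lt)) (g : CX lt) :
  co_open lt W -> W g ->
  exists L, compact_open_pairs L /\ maps_into L g /\ forall h, maps_into L h -> W h.
Proof.
  intros HW Wg. destruct (HW g Wg) as [L [HL HLW]]. exists L. split; [|split].
  - intros p Hp. destruct (HL p Hp) as [? [? _]]. split; assumption.
  - intros p Hp. apply HL, Hp.
  - exact HLW.
Qed.

Lemma co_open_full : co_open lt (fun _ => True).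
Proof. intros f _. exists nil. split; [intros _ [] | auto]. Qed.

Lemma co_open_inter (U V : set (CX lt)) :
  co_open lt U -> co_open lt V -> co_open lt (fun g => U g /\ V g).
Proof.
  intros HU HV f [Uf Vf].
  destruct (HU f Uf) as [L1 [A1 B1]]. destruct (HV f Vf) as [L2 [A2 B2]].
  exists (L1 ++ L2). split.
  - intros p Hp. apply in_app_or in Hp. destruct Hp; auto.
  - intros g Hg. split; [apply B1 | apply B2]; intros p Hp; apply Hg, in_or_app; auto.
Qed.

Lemma co_open_eval (x : X) (V : R -> Prop) :
  open_set V -> co_open lt (fun h => V (proj1_sig h x)).
Proof.
  intros HV f Hf. exists ((fun y => y = x, V) :: nil). split.
  - intros p [<-|[]]. split; [apply single_compact | split; [exact HV | intros y ->; exact Hf]].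
  - intros g Hg. exact (Hg _ (or_introl eq_refl) x eq_refl).
Qed.

Lemma co_open_T1 (h : CX lt) : co_open lt (fun g => g <> h).
Proof.
  intros g Hg.
  assert (Hx : exists x, proj1_sig g x <> proj1_sig h x).
  { apply NNPP. intros Hall. apply Hg. destruct g as [g Hgc], h as [h Hhc]. simpl in Hall.
    assert (g = h) as <-.
    { apply functional_extensionality. intros x. apply NNPP. intros Hne. eauto. }
    f_equal. apply proof_irrelevance. }
  destruct Hx as [x Hx].
  destruct (co_open_eval x _ (open_neq (proj1_sig h x)) g Hx) as [L [HL HLW]].
  exists L. split; [exact HL|]. intros k Hk ->. exact (HLW h Hk eq_refl).
Qed.

Lemma uniform_margin (g : X -> R) (K : set X) (V : R -> Prop) :
  continuous_on lt g -> compact_in (order_open lt) K -> open_set V ->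
  (forall x, K x -> V (g x)) ->
  exists m, forall x, K x -> forall r, Rabs (r - g x) < / (INR m + 1) -> V r.
Proof.
  intros Hg HK HV HKV.
  destruct (choice (fun x m => K x -> forall r, Rabs (r - g x) < / (INR m + 1) -> V r))
    as [m Hm].
  { intros x. destruct (classic (K x)) as [Kx|Kx]; [|exists 0%nat; contradiction].
    destruct (open_set_inv_succ V (g x) HV (HKV x Kx)) as [m Hm]. exists m. auto. }
  set (k := fun x => (2 * m x + 1)%nat).
  destruct (compact_point_cover _ K (fun x y => Rabs (g y - g x) < / (INR (k x) + 1)) HK)
    as [xs [HxsK Hxs]].
  { intros x _. split.
    - exact (Hg (fun r => Rabs (r - g x) < / (INR (k x) + 1)) (open_ball _ _)).
    - rewrite Rminus_diag, Rabs_R0. apply inv_succ_pos. }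
  exists (list_max (map k xs)). intros y Ky r Hr.
  destruct (Hxs y Ky) as [x [Hx Hyx]]. apply (Hm x (HxsK x Hx)).
  rewrite <- inv_succ_double.
  pose proof (inv_succ_le _ _ (le_list_max _ _ (in_map k _ _ Hx))).
  pose proof (Rabs_sub_via r (g y) (g x)). rewrite (Rabs_minus_sym (g x)) in *.
  fold (k x). lra.
Qed.

Lemma maps_into_uniform (L : list (set X * (R -> Prop))) (g : CX lt) :
  compact_open_pairs L -> maps_into L g ->
  exists M, forall h : CX lt,
    (forall p, In p L -> forall x, fst p x ->
       Rabs (proj1_sig h x - proj1_sig g x) < / (INR M + 1)) ->
    maps_into L h.
Proof.
  intros HL HgL.
  destruct (choice (fun p m => In p L -> forall x, fst p x ->
      forall r, Rabs (r - proj1_sig g x) < / (INR m + 1) -> snd p r)) as [m Hm].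
  { intros p. destruct (classic (In p L)) as [Hp|Hp]; [|exists 0%nat; contradiction].
    destruct (uniform_margin (proj1_sig g) (fst p) (snd p) (proj2_sig g)
                (proj1 (HL p Hp)) (proj2 (HL p Hp)) (HgL p Hp)) as [m Hm].
    exists m. auto. }
  exists (list_max (map m L)). intros h Hh p Hp x Hx. apply (Hm p Hp x Hx).
  eapply Rlt_le_trans; [apply (Hh p Hp x Hx)|].
  apply inv_succ_le, le_list_max, in_map, Hp.
Qed.

Section OrdinalB.

Variable e : X -> nat -> nat.
Hypothesis lt_wo : strict_well_order lt.
Hypothesis e_unbounded : ~ dominated (fun f => exists x, f = e x).
Hypothesis e_segment_dominated : forall x, dominated (fun f => exists y, lt y x /\ f = e y).

Definition ole (x y : X) : Prop := ~ lt y x.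

Lemma ord_irrefl (x : X) : ~ lt x x.
Proof. apply lt_wo. Qed.

Lemma ord_trans (x y z : X) : lt x y -> lt y z -> lt x z.
Proof. apply lt_wo. Qed.

Lemma ord_total (x y : X) : lt x y \/ x = y \/ lt y x.
Proof. apply lt_wo. Qed.

Lemma ord_wf : well_founded lt.
Proof. apply lt_wo. Qed.

Lemma ole_refl (x : X) : ole x x.
Proof. apply ord_irrefl. Qed.

Lemma lt_ole (x y : X) : lt x y -> ole x y.
Proof. intros Hxy Hyx. exact (ord_irrefl x (ord_trans _ _ _ Hxy Hyx)). Qed.

Lemma not_ole_lt (x y : X) : ~ ole x y -> lt y x.
Proof. apply NNPP. Qed.

Lemma ole_lt_trans (x y z : X) : ole x y -> lt y z -> lt x z.
Proof.
  intros Hxy Hyz. destruct (ord_total x y) as [H|[->|H]];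
    [exact (ord_trans _ _ _ H Hyz) | exact Hyz | contradiction].
Qed.

Lemma lt_ole_trans (x y z : X) : lt x y -> ole y z -> lt x z.
Proof.
  intros Hxy Hyz. destruct (ord_total y z) as [H|[<-|H]];
    [exact (ord_trans _ _ _ Hxy H) | exact Hxy | contradiction].
Qed.

Lemma ole_trans (x y z : X) : ole x y -> ole y z -> ole x z.
Proof. intros Hxy Hyz Hzx. exact (Hxy (ole_lt_trans _ _ _ Hyz Hzx)). Qed.

Lemma ord_min (P : X -> Prop) : (exists x, P x) -> exists m, P m /\ forall y, P y -> ole m y.
Proof.
  intros [x Px]. apply NNPP. intros Hno. revert Px.
  induction x as [x IH] using (well_founded_ind ord_wf). intros Px.
  apply Hno. exists x. split; [exact Px|]. intros y Py Hyx. exact (IH y Hyx Py).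
Qed.

(* The uncountable cofinality of [b]: the [e]-image of a set bounded by countably many
   points is a countable union of dominated families. *)
Lemma countable_bounded (s : nat -> X) : exists z, forall n, lt (s n) z.
Proof.
  apply NNPP. intros Hno. apply e_unbounded.
  apply dominated_mono
    with (Q := fun f => exists n, (exists y, lt y (s n) /\ f = e y) \/ f = e (s n)).
  - apply dominated_countable_union. intros n.
    apply dominated_union; [apply e_segment_dominated | apply dominated_singleton].
  - intros f [y ->]. apply NNPP. intros Hy. apply Hno. exists y. intros n.
    destruct (ord_total (s n) y) as [H|[H|H]]; [exact H | |];
      exfalso; apply Hy; exists n; [right; rewrite H | left; exists y; split]; auto.
Qed.

Lemma countable_le_bound (s : nat -> X) : exists z, forall n, ole (s n) z.
Proof.
  destruct (countable_bounded s) as [z Hz]. exists z. intros n. apply lt_ole, Hz.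
Qed.

Lemma ord_no_max (x : X) : exists y, lt x y.
Proof. destruct (countable_bounded (fun _ => x)) as [y Hy]. exists y. apply (Hy 0%nat). Qed.

Lemma X_inhabited : inhabited X.
Proof.
  apply NNPP. intros Hempty. apply e_unbounded. exists (fun _ => 0%nat).
  intros f [x _]. exfalso. exact (Hempty (inhabits x)).
Qed.

Lemma list_bounded (xs : list X) : exists z, forall x, In x xs -> lt x z.
Proof.
  destruct X_inhabited as [x0]. destruct (countable_bounded (fun n => nth n xs x0)) as [z Hz].
  exists z. intros x Hx. destruct (In_nth xs x x0 Hx) as [n [_ <-]]. apply Hz.
Qed.

Lemma ord_succ (x : X) : exists u, lt x u /\ forall y, lt y u -> ole y x.
Proof.
  destruct (ord_min (lt x) (ord_no_max x)) as [u [Hxu Hu]].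
  exists u. split; [exact Hxu|]. intros y Hyu Hxy. exact (Hu y Hxy Hyu).
Qed.

Lemma countable_sup (s : nat -> X) :
  exists l, (forall n, ole (s n) l) /\ forall a, lt a l -> exists n, lt a (s n).
Proof.
  destruct (ord_min (fun z => forall n, ole (s n) z) (countable_le_bound s)) as [l [Hl Hmin]].
  exists l. split; [exact Hl|]. intros a Hal. apply NNPP. intros Hno.
  apply (Hmin a); [|exact Hal]. intros n Hna. apply Hno. exists n. exact Hna.
Qed.

Definition lower (lo : option X) (y : X) : Prop :=
  match lo with None => True | Some a => lt a y end.

Definition upper (up : option X) (y : X) : Prop :=
  match up with None => True | Some b => lt y b end.

Lemma lower_mono (lo : option X) (x y : X) : ole x y -> lower lo x -> lower lo y.
Proof. destruct lo as [a|]; simpl; [intros Hxy Hax; exact (lt_ole_trans _ _ _ Hax Hxy) | auto]. Qed.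

Lemma upper_mono (up : option X) (x y : X) : ole x y -> upper up y -> upper up x.
Proof. destruct up as [b|]; simpl; [intros Hxy Hyb; exact (ole_lt_trans _ _ _ Hxy Hyb) | auto]. Qed.

Definition Ioc (lo : option X) (x : X) : set X := fun y => lower lo y /\ ole y x.

Lemma Ioc_open (lo : option X) (x : X) : order_open lt (Ioc lo x).
Proof.
  intros y [Hy Hyx]. destruct (ord_succ x) as [u [Hxu Hu]].
  exists lo, (Some u). split; [exact Hy | split; [exact (ole_lt_trans _ _ _ Hyx Hxu)|]].
  intros y' Hy' Hy'u. split; [exact Hy' | apply Hu, Hy'u].
Qed.

(* Induction on the right end point [z]: a member [U] of the cover containing [z]
   contains some [(a, z]], and [(lo, a]] is covered by induction. *)
Lemma Ioc_compact (lo : option X) (x : X) : compact_in (order_open lt) (Ioc lo x).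
Proof.
  intros F HF Hcov. change (finitely_covered F (Ioc lo x)).
  assert (Hall : forall z, ole z x -> finitely_covered F (Ioc lo z)).
  { intros z. induction z as [z IH] using (well_founded_ind ord_wf). intros Hzx.
    destruct (classic (lower lo z)) as [Hz|Hz].
    2:{ apply finitely_covered_empty. intros y [Hy Hyz]. exact (Hz (lower_mono lo y z Hyz Hy)). }
    destruct (Hcov z (conj Hz Hzx)) as [U [FU Uz]].
    destruct (HF U FU z Uz) as [a [u [Ha [Hu HU]]]].
    destruct a as [a|].
    - apply finitely_covered_mono with (P := fun y => Ioc lo a y \/ U y).
      + apply finitely_covered_union; [|apply finitely_covered_single, FU].
        apply IH; [exact Ha | exact (ole_trans _ _ _ (lt_ole _ _ Ha) Hzx)].
      + intros y [Hy Hyz]. destruct (classic (ole y a)) as [Hya|Hya];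
          [left; split; assumption | right].
        apply HU; [exact (not_ole_lt _ _ Hya) | exact (upper_mono u y z Hyz Hu)].
    - apply finitely_covered_mono with (P := U); [apply finitely_covered_single, FU|].
      intros y [_ Hyz]. apply HU; [exact I | exact (upper_mono u y z Hyz Hu)]. }
  apply Hall, ole_refl.
Qed.

Lemma compact_bounded_above (K : set X) :
  compact_in (order_open lt) K -> exists z, forall y, K y -> lt y z.
Proof.
  intros HK. destruct (compact_point_cover _ K (Ioc None) HK) as [xs [_ Hxs]].
  { intros x _. split; [apply Ioc_open | split; [exact I | apply ole_refl]]. }
  destruct (list_bounded xs) as [z Hz]. exists z. intros y Ky.
  destruct (Hxs y Ky) as [x [Hx [_ Hyx]]]. exact (ole_lt_trans _ _ _ Hyx (Hz x Hx)).
Qed.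

Lemma pairs_bounded_above (L : list (set X * (R -> Prop))) :
  compact_open_pairs L -> exists z, forall p, In p L -> forall x, fst p x -> lt x z.
Proof.
  intros HL. destruct X_inhabited as [x0].
  destruct (choice (fun p z => In p L -> forall x, fst p x -> lt x z)) as [zp Hzp].
  { intros p. destruct (classic (In p L)) as [Hp|Hp]; [|exists x0; contradiction].
    destruct (compact_bounded_above (fst p) (proj1 (HL p Hp))) as [z Hz]. exists z. auto. }
  destruct (list_bounded (map zp L)) as [z Hz]. exists z. intros p Hp x Hx.
  exact (ord_trans _ _ _ (Hzp p Hp x Hx) (Hz _ (in_map zp L p Hp))).
Qed.

Definition indicator (z : X) : X -> R :=
  fun y => if excluded_middle_informative (lt z y) then 1 else 0.

Lemma indicator_gt (z y : X) : lt z y -> indicator z y = 1.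
Proof. intros H. unfold indicator. destruct (excluded_middle_informative (lt z y)); tauto. Qed.

Lemma indicator_le (z y : X) : ole y z -> indicator z y = 0.
Proof.
  intros H. unfold indicator.
  destruct (excluded_middle_informative (lt z y)); [contradiction | reflexivity].
Qed.

Lemma indicator_continuous (z : X) : continuous_on lt (indicator z).
Proof.
  intros V _ y Hy. destruct (classic (lt z y)) as [Hzy|Hzy].
  - exists (Some z), None. split; [exact Hzy | split; [exact I|]].
    intros y' Hzy' _. rewrite (indicator_gt z y') by exact Hzy'.
    rewrite (indicator_gt z y) in Hy by exact Hzy. exact Hy.
  - destruct (ord_succ z) as [u [Hzu Hu]].
    exists None, (Some u). split; [exact I | split; [exact (ole_lt_trans _ _ _ Hzy Hzu)|]].
    intros y' _ Hy'u. rewrite (indicator_le z y') by exact (Hu y' Hy'u).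
    rewrite (indicator_le z y) in Hy by exact Hzy. exact Hy.
Qed.

Definition indicatorC (z : X) : CX lt := exist _ (indicator z) (indicator_continuous z).

Lemma indicatorC_neq_zero (z : X) : indicatorC z <> zeroC lt.
Proof.
  intros E. destruct (ord_no_max z) as [w Hzw].
  assert (Ew := f_equal (fun g => proj1_sig g w) E). simpl in Ew.
  rewrite indicator_gt in Ew by exact Hzw. lra.
Qed.

(* A basic neighbourhood of [0] only constrains a bounded set of points. *)
Lemma nbhd_zero_contains_indicators (W : set (CX lt)) :
  co_open lt W -> W (zeroC lt) -> exists z0, forall z, ole z0 z -> W (indicatorC z).
Proof.
  intros HW W0. destruct (co_open_basic W _ HW W0) as [L [HL [H0 HLW]]].
  destruct (pairs_bounded_above L HL) as [z0 Hz0]. exists z0. intros z Hz. apply HLW.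
  intros p Hp x Hx. simpl. rewrite indicator_le.
  - exact (H0 p Hp x Hx).
  - exact (lt_ole _ _ (lt_ole_trans _ _ _ (Hz0 p Hp x Hx) Hz)).
Qed.

Lemma countable_nbhds_zero_contain_indicator (U : nat -> set (CX lt)) :
  (forall n, co_open lt (U n) /\ U n (zeroC lt)) -> exists z, forall n, U n (indicatorC z).
Proof.
  intros HU. destruct (choice (fun n z0 => forall z, ole z0 z -> U n (indicatorC z))) as [z0 Hz0].
  { intros n. apply nbhd_zero_contains_indicators; apply HU. }
  destruct (countable_le_bound z0) as [z Hz]. exists z. intros n. apply Hz0, Hz.
Qed.

Lemma Cc_uncountable_pseudocharacter : uncountable_pseudocharacter (co_open lt).
Proof.
  exists (zeroC lt). intros U HU.
  destruct (countable_nbhds_zero_contain_indicator U HU) as [z Hz].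
  exists (indicatorC z). split; [apply indicatorC_neq_zero | exact Hz].
Qed.

Lemma Cc_uncountable_tightness : uncountable_tightness (co_open lt).
Proof.
  exists (fun g => exists z, g = indicatorC z), (zeroC lt). split.
  - intros W HW W0. destruct (nbhd_zero_contains_indicators W HW W0) as [z0 Hz0].
    exists (indicatorC z0). split; [apply Hz0, ole_refl | exists z0; reflexivity].
  - intros b Hb Hcl. destruct (choice (fun n z => b n = indicatorC z) Hb) as [zs Hzs].
    destruct (countable_bounded zs) as [G HG].
    destruct (Hcl (fun h => proj1_sig h G <> 1)) as [y [Hy [n ->]]].
    + apply (co_open_eval G (fun r => r <> 1)), open_neq.
    + simpl. lra.
    + apply Hy. rewrite Hzs. simpl. apply indicator_gt, HG.
Qed.

(* If the oscillation on every tail were [>= eps], pairs witnessing it would build an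
   increasing sequence whose supremum is a point of discontinuity of [f]. *)
Lemma tail_oscillation_small (f : X -> R) : continuous_on lt f ->
  forall eps, 0 < eps -> exists G, forall x y, ole G x -> ole G y -> Rabs (f x - f y) < eps.
Proof.
  intros Hf eps Heps. apply NNPP. intros Hno.
  assert (Hbad : forall G, exists q : X * X,
      lt G (fst q) /\ ole (fst q) (snd q) /\ eps <= Rabs (f (fst q) - f (snd q))).
  { intros G. destruct (ord_no_max G) as [G' HG']. apply NNPP. intros Hq. apply Hno.
    exists G'. intros x y Hx Hy. apply Rnot_le_lt. intros Hxy.
    destruct (ord_total x y) as [Hlt|[<-|Hlt]].
    - apply Hq. exists (x, y). simpl.
      split; [exact (lt_ole_trans _ _ _ HG' Hx) | split; [exact (lt_ole _ _ Hlt) | exact Hxy]].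
    - rewrite Rminus_diag, Rabs_R0 in Hxy. lra.
    - apply Hq. exists (y, x). simpl. rewrite Rabs_minus_sym.
      split; [exact (lt_ole_trans _ _ _ HG' Hy) | split; [exact (lt_ole _ _ Hlt) | exact Hxy]]. }
  destruct (choice _ Hbad) as [q Hq]. destruct X_inhabited as [x0].
  set (z := fix z k := match k with 0%nat => x0 | S k => snd (q (z k)) end).
  destruct (countable_sup z) as [l [Hzl Hlub]].
  destruct (Hf (fun r => Rabs (r - f l) < eps / 2) (open_ball _ _) l)
    as [lo [up [Hlo [Hup Hnear]]]].
  { rewrite Rminus_diag, Rabs_R0. lra. }
  assert (Hk : exists k, lower lo (z k)).
  { destruct lo as [a|]; [exact (Hlub a Hlo) | exists 0%nat; exact I]. }
  destruct Hk as [k Hk].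
  assert (Hclose : forall w, lt (z k) w -> ole w (z (S k)) -> Rabs (f w - f l) < eps / 2).
  { intros w Hkw Hwk. apply Hnear.
    - exact (lower_mono lo (z k) w (lt_ole _ _ Hkw) Hk).
    - exact (upper_mono up w l (ole_trans _ _ _ Hwk (Hzl (S k))) Hup). }
  destruct (Hq (z k)) as [H1 [H2 Hge]].
  pose proof (Hclose _ H1 H2).
  pose proof (Hclose (snd (q (z k))) (lt_ole_trans _ _ _ H1 H2) (ole_refl _)).
  pose proof (Rabs_sub_via (f (fst (q (z k)))) (f l) (f (snd (q (z k))))). lra.
Qed.

Lemma continuous_eventually_constant (f : X -> R) : continuous_on lt f ->
  exists G, forall x, ole G x -> f x = f G.
Proof.
  intros Hf. destruct (choice (fun n G => forall x y, ole G x -> ole G y ->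
                                 Rabs (f x - f y) < / (INR n + 1))) as [Gs HGs].
  { intros n. apply tail_oscillation_small; [exact Hf | apply inv_succ_pos]. }
  destruct (countable_le_bound Gs) as [G HG]. exists G. intros x HGx.
  assert (E : Rabs (f x - f G) = 0).
  { apply eq0_of_lt_inv_succ; [apply Rabs_pos|]. intros n.
    apply HGs; [exact (ole_trans _ _ _ (HG n) HGx) | exact (HG n)]. }
  apply Rminus_diag_uniq. apply NNPP. intros Hne. exact (Rabs_no_R0 _ Hne E).
Qed.

Lemma uniform_on_initial_segment (g : CX lt) (z : X) (eps : R) : 0 < eps ->
  exists L, compact_open_pairs L /\ maps_into L g /\
    forall h, maps_into L h -> forall x, ole x z ->
      Rabs (proj1_sig h x - proj1_sig g x) < 2 * eps.
Proof.
  intros Heps. set (gf := proj1_sig g).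
  destruct (choice (fun x lo => lower lo x /\
      forall y, lower lo y -> ole y x -> Rabs (gf y - gf x) < eps)) as [lo Hlo].
  { intros x. destruct (proj2_sig g _ (open_ball (gf x) eps) x) as [l [u [Hl [Hu Hnear]]]].
    { rewrite Rminus_diag, Rabs_R0. exact Heps. }
    exists l. split; [exact Hl|]. intros y Hy Hyx. apply Hnear; [exact Hy|].
    exact (upper_mono u y x Hyx Hu). }
  destruct (compact_point_cover _ (Ioc None z) (fun x => Ioc (lo x) x) (Ioc_compact None z))
    as [xs [_ Hxs]].
  { intros x _. split; [apply Ioc_open | split; [apply Hlo | apply ole_refl]]. }
  exists (map (fun x => (Ioc (lo x) x, fun r => Rabs (r - gf x) < eps)) xs).
  split; [|split].
  - intros p Hp. apply in_map_iff in Hp. destruct Hp as [x [<- _]].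
    split; [apply Ioc_compact | apply open_ball].
  - intros p Hp. apply in_map_iff in Hp. destruct Hp as [x [<- _]].
    intros y [Hy Hyx]. apply Hlo; assumption.
  - intros h Hh y Hyz. destruct (Hxs y (conj I Hyz)) as [x [Hx [Hy Hyx]]].
    assert (Hhy : Rabs (proj1_sig h y - gf x) < eps).
    { exact (Hh _ (in_map (fun x => (Ioc (lo x) x, fun r => Rabs (r - gf x) < eps)) xs x Hx)
                y (conj Hy Hyx)). }
    pose proof (proj2 (Hlo x) y Hy Hyx).
    pose proof (Rabs_sub_via (proj1_sig h y) (gf x) (gf y)). lra.
Qed.

(* Every function in [C(X)] is constant beyond some point, and countably many such points
   are bounded, so compact-open convergence is uniform convergence. *)
Lemma convergence_uniform (s : nat -> CX lt) (g : CX lt) :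
  converges (co_open lt) s g -> forall eps, 0 < eps ->
  exists n0, forall n, (n0 <= n)%nat -> forall x, Rabs (proj1_sig (s n) x - proj1_sig g x) < eps.
Proof.
  intros Hc eps Heps.
  destruct (continuous_eventually_constant _ (proj2_sig g)) as [Gg HGg].
  destruct (choice (fun n G => forall x, ole G x -> proj1_sig (s n) x = proj1_sig (s n) G))
    as [Gs HGs].
  { intros n. apply continuous_eventually_constant, (proj2_sig (s n)). }
  destruct (countable_le_bound (fun n => match n with 0%nat => Gg | S n => Gs n end))
    as [T HT].
  destruct (uniform_on_initial_segment g T (eps / 2)) as [L [HL [HgL HLh]]]; [lra|].
  destruct (Hc (maps_into L)) as [n0 Hn0].
  { exists (maps_into L). split; [apply co_open_maps_into, HL | split; [exact HgL | auto]]. }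
  exists n0. intros n Hn x.
  assert (Hclose : forall y, ole y T -> Rabs (proj1_sig (s n) y - proj1_sig g y) < eps).
  { intros y Hy. specialize (HLh (s n) (Hn0 n Hn) y Hy). lra. }
  destruct (classic (ole x T)) as [HxT|HxT]; [exact (Hclose x HxT)|].
  assert (HTx : ole T x) by exact (lt_ole _ _ (not_ole_lt _ _ HxT)).
  rewrite (HGg x (ole_trans _ _ _ (HT 0%nat) HTx)), (HGs n x (ole_trans _ _ _ (HT (S n)) HTx)).
  rewrite <- (HGg T (HT 0%nat)), <- (HGs n T (HT (S n))).
  apply Hclose, ole_refl.
Qed.

Lemma Cc_cs_star_character : countable_cs_star_character (co_open lt).
Proof.
  intros g. exists (fun k h => forall x, Rabs (proj1_sig h x - proj1_sig g x) < / (INR k + 1)).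
  intros s Hs O [W [HW [Wg HWO]]].
  destruct (co_open_basic W g HW Wg) as [L [HL [HgL HLW]]].
  destruct (maps_into_uniform L g HL HgL) as [M HM].
  exists (fun h => forall x, Rabs (proj1_sig h x - proj1_sig g x) < / (INR M + 1)).
  split; [exists M; reflexivity | split; [|split]].
  - intros x. rewrite Rminus_diag, Rabs_R0. apply inv_succ_pos.
  - intros h Hh. apply HWO, HLW, HM. intros p _ x _. apply Hh.
  - destruct (convergence_uniform s g Hs (/ (INR M + 1)) (inv_succ_pos M)) as [n0 Hn0].
    intros m. exists (Nat.max m n0). split; [lia | apply Hn0; lia].
Qed.

Definition below_dominated (a : nat -> nat) (x : X) : Prop :=
  forall y, ole y x -> eventually_le (e y) a.

Definition gbase_nbhd (a : nat -> nat) : set (CX lt) :=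
  fun g => forall x, below_dominated a x -> Rabs (proj1_sig g x) < / (INR (a 0%nat) + 1).

Lemma gbase_nbhd_is_nbhd (a : nat -> nat) : is_nbhd (co_open lt) (zeroC lt) (gbase_nbhd a).
Proof.
  assert (Hz : exists z, ~ below_dominated a z).
  { apply NNPP. intros Hall. apply e_unbounded. exists a. intros f [x ->].
    apply NNPP. intros Hx. apply Hall. exists x. intros Hbx. exact (Hx (Hbx x (ole_refl x))). }
  destruct Hz as [z Hz].
  set (L := (Ioc None z, fun r => Rabs (r - 0) < / (INR (a 0%nat) + 1)) :: nil).
  exists (maps_into L). split; [|split].
  - apply co_open_maps_into. intros p [<-|[]]. split; [apply Ioc_compact | apply open_ball].
  - intros p [<-|[]] x _. simpl. rewrite Rminus_0_r, Rabs_R0. apply inv_succ_pos.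
  - intros g Hg x Hx.
    assert (Hxz : lt x z).
    { apply not_ole_lt. intros Hzx. apply Hz. intros y Hyz.
      exact (Hx y (ole_trans _ _ _ Hyz Hzx)). }
    pose proof (Hg _ (or_introl eq_refl) x (conj I (lt_ole _ _ Hxz))) as Hgx.
    simpl in Hgx. rewrite Rminus_0_r in Hgx. exact Hgx.
Qed.

Lemma gbase_nbhd_cofinal (N : set (CX lt)) :
  is_nbhd (co_open lt) (zeroC lt) N -> exists a, forall g, gbase_nbhd a g -> N g.
Proof.
  intros [W [HW [W0 HWN]]].
  destruct (co_open_basic W _ HW W0) as [L [HL [H0 HLW]]].
  destruct (pairs_bounded_above L HL) as [d Hd].
  destruct (maps_into_uniform L (zeroC lt) HL H0) as [M HM].
  destruct (e_segment_dominated d) as [b Hb].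
  exists (fun i => Nat.max (b i) M). intros h Hh. apply HWN, HLW, HM.
  intros p Hp x Hx. simpl. rewrite Rminus_0_r.
  assert (Hbx : below_dominated (fun i => Nat.max (b i) M) x).
  { intros y Hyx. destruct (Hb (e y)) as [n Hn].
    { exists y. split; [exact (ole_lt_trans _ _ _ Hyx (Hd p Hp x Hx)) | reflexivity]. }
    exists n. intros i Hi. specialize (Hn i Hi). lia. }
  eapply Rlt_le_trans; [exact (Hh x Hbx) | apply inv_succ_le; lia].
Qed.

Lemma gbase_nbhd_antitone (a b : nat -> nat) :
  (forall n, (a n <= b n)%nat) -> forall g, gbase_nbhd b g -> gbase_nbhd a g.
Proof.
  intros Hab g Hg x Hx. eapply Rlt_le_trans; [apply Hg | apply inv_succ_le, Hab].
  intros y Hy. destruct (Hx y Hy) as [n Hn]. exists n. intros i Hi.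
  specialize (Hn i Hi). specialize (Hab i). lia.
Qed.

Lemma Cc_G_base_at_zero : G_base_at (co_open lt) (zeroC lt).
Proof.
  exists gbase_nbhd. split; [exact gbase_nbhd_is_nbhd | split].
  - exact gbase_nbhd_cofinal.
  - exact gbase_nbhd_antitone.
Qed.

End OrdinalB.

End OrderTopology.

Lemma ordinal_b_enumeration {X : Type} (lt : X -> X -> Prop) : is_ordinal_b lt ->
  exists e : X -> nat -> nat, ~ dominated (fun f => exists x, f = e x) /\
    forall x, dominated (fun f => exists y, lt y x /\ f = e y).
Proof.
  intros [_ [[F [HF [e [_ [_ Hsurj]]]]] Hseg]]. exists e. split.
  - intros Hdom. apply (proj1 (not_in_sigma_compact_iff F) HF).
    apply dominated_mono with (1 := Hdom). intros f Ff.
    destruct (Hsurj f Ff) as [x [_ <-]]. exists x. reflexivity.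
  - intros x. apply NNPP. intros Hnd. apply (Hseg x).
    exists (fun f => exists y, lt y x /\ f = e y).
    split; [apply not_in_sigma_compact_iff, Hnd|].
    exists (fun f => epsilon (inhabits x) (fun y => lt y x /\ f = e y)). split.
    + intros f Hf. exact (proj1 (epsilon_spec (inhabits x) _ Hf)).
    + intros f1 f2 H1 H2 E.
      rewrite (proj2 (epsilon_spec (inhabits x) _ H1)), (proj2 (epsilon_spec (inhabits x) _ H2)), E.
      reflexivity.
Qed.

Theorem mainTheorem18 (X : Type) (lt : X -> X -> Prop) (HX : is_ordinal_b lt) :
  G_base_at (co_open lt) (zeroC lt) /\
  countable_cs_star_character (co_open lt) /\
  uncountable_tightness (co_open lt) /\
  uncountable_pseudocharacter (co_open lt) /\
  ~ submetrizable (co_open lt) /\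
  ~ sigma_space (co_open lt).
Proof.
  destruct (ordinal_b_enumeration lt HX) as [e [He Hseg]].
  assert (Hwo : strict_well_order lt) by apply HX.
  pose proof (Cc_uncountable_pseudocharacter X lt e Hwo He Hseg) as Hpc.
  refine (conj _ (conj _ (conj _ (conj Hpc (conj _ _))))).
  - exact (Cc_G_base_at_zero X lt e Hwo He Hseg).
  - exact (Cc_cs_star_character X lt e Hwo He Hseg).
  - exact (Cc_uncountable_tightness X lt e Hwo He Hseg).
  - intros Hsub. exact (submetrizable_countable_pseudocharacter _ Hsub Hpc).
  - intros Hsigma.
    exact (sigma_space_countable_pseudocharacter _ _ (co_open_full X lt) (co_open_inter X lt)
             (co_open_T1 X lt) Hsigma Hpc).
Qed.
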